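(* Let $G$ be a graph containing a perfect matching $M$, and let $W$ be a shifted $M$-walk in $G$ with endpoints $a$ and $b$. Then $W$ contains a simple shifted $M$-walk $W'$ with endpoints $a$ and $b$.
   Context: Given a perfect matching $M$ in a graph $G$, a shifted $M$-walk with endpoints $a = v_1$ and $b = v_{2\ell}$ is a walk $v_1 v_2 \dots v_{2\ell}$ in $G$ such that $v_{2i}v_{2i+1} \in M$ for every $1 \leq i \leq \ell - 1$ and $v_{2i-1}v_{2i} \notin M$ for every $1 \leq i \leq \ell$. A shifted $M$-walk is simple if it contains each edge of $M$ at most twice. *)

From mathcomp Require Import all_boot all_order.
Set Implicit Arguments. Unset Strict Implicit. Unset Printing Implicit Defensive.

(* A (simple) graph on a finite vertex type V: a symmetric irreflexive
   adjacency relation. Edges are unordered pairs, represented as 2-element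
   sets [set u; v]. *)
Definition simple_graph (V : finType) (e : rel V) : Prop :=
  symmetric e /\ irreflexive e.

Definition perfect_matching (V : finType) (e : rel V) (M : {set {set V}}) : Prop :=
  (forall E, E \in M -> exists u v, e u v /\ E = [set u; v]) /\
  (forall x : V, #|[set E in M | x \in E]| = 1).

Definition walk_edges (V : finType) (s : seq V) : seq {set V} :=
  [seq [set p.1; p.2] | p <- zip s (behead s)].

(* s = v_1 ... v_{2l} (l >= 1) is a shifted M-walk in G with endpoints a, b:
   consecutive vertices adjacent in G, the i-th traversed edge (0-indexed)
   is in M iff i is odd (i.e. v_{2i}v_{2i+1} in M, v_{2i-1}v_{2i} not in M). *)
Definition shifted_walk (V : finType) (e : rel V) (M : {set {set V}})
    (a b : V) (s : seq V) : Prop :=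
  [/\ 0 < size s /\ ~~ odd (size s),
      head a s = a /\ last a s = b,
      path e a (behead s) &
      forall i, i < (size s).-1 ->
        (nth set0 (walk_edges s) i \in M) = odd i].

Definition simple_walk (V : finType) (M : {set {set V}}) (s : seq V) : Prop :=
  forall E, E \in M -> count_mem E (walk_edges s) <= 2.

Definition walk_contains (V : finType) (W W' : seq V) : Prop :=
  {subset walk_edges W' <= walk_edges W}.

From mathcomp Require Import all_boot all_order.
From mathcomp Require Import zify.

Set Implicit Arguments.
Unset Strict Implicit.
Unset Printing Implicit Defensive.

(* If two odd-position vertices of a shifted walk coincide (the vertices v_2,
   v_4, ... from which the M-edges leave), cutting out the closed subwalk
   between them leaves a shorter shifted walk using only edges of the old one:
   the cut has even length, so the alternation of M- and non-M-edges is kept.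
   Once all odd-position vertices are distinct, the occurrences of an M-edge E,
   which all sit at odd positions, leave from pairwise distinct vertices of E,
   so E is traversed at most #|E| = 2 times. *)

Section ShiftedWalks.
Variable V : finType.
Implicit Types (s : seq V) (a : V).

Lemma size_walk_edges s : size (walk_edges s) = (size s).-1.
Proof. rewrite /walk_edges size_map size_zip size_behead; lia. Qed.

Lemma nth_walk_edges a s i : i < (size s).-1 ->
  nth set0 (walk_edges s) i = [set nth a s i; nth a s i.+1].
Proof.
move=> lt_i; have lt_iz : i < size (zip s (behead s)).
  by rewrite size_zip size_behead; lia.
by rewrite /walk_edges (nth_map (a, a)) // nth_zip_cond lt_iz /= nth_behead.
Qed.

Lemma shifted_walkP (e : rel V) (M : {set {set V}}) a b s :
  shifted_walk e M a b s <->
  [/\ 0 < size s /\ ~~ odd (size s), nth a s 0 = a /\ nth a s (size s).-1 = b,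
     (forall i, i.+1 < size s -> e (nth a s i) (nth a s i.+1)) &
     (forall i, i.+1 < size s -> ([set nth a s i; nth a s i.+1] \in M) = odd i)].
Proof.
rewrite /shifted_walk nth_last nth0.
case: s => [|x t] /=; first by split; do 2!case.
split; case=> sz_s [-> last_s] ePs Ms; split=> //.
- by move=> i lt_i; move/(pathP a): ePs; apply; lia.
- by move=> i lt_i; rewrite -(nth_walk_edges a) ?Ms //=; lia.
- by apply/(pathP a) => i lt_i; apply: ePs; lia.
- by move=> i lt_i; rewrite (nth_walk_edges a) ?Ms //=; lia.
Qed.

Lemma walk_contains_trans s1 s2 s3 :
  walk_contains s1 s2 -> walk_contains s2 s3 -> walk_contains s1 s3.
Proof. by move=> sub12 sub23 E /sub23 /sub12. Qed.

Lemma count_walk_edges_le_card (A : {pred nat}) a s (E : {set V}) :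
  {in A &, injective (nth a s)} ->
  (forall i, i < (size s).-1 -> nth set0 (walk_edges s) i = E -> i \in A) ->
  count_mem E (walk_edges s) <= #|E|.
Proof.
move=> injA occA; set l := walk_edges s.
set F := [seq i <- iota 0 (size l) | nth set0 l i == E].
have -> : count_mem E l = size F.
  by rewrite size_filter -{1}(mkseq_nth set0 l) /mkseq count_map.
have occF i : i \in F -> A i /\ nth a s i \in E.
  rewrite mem_filter mem_iota add0n size_walk_edges => /andP[/eqP lE lt_i].
  split; first exact: occA.
  by rewrite -lE (nth_walk_edges a) // !inE eqxx.
have uniq_sF : uniq (map (nth a s) F).
  rewrite map_inj_in_uniq ?filter_uniq ?iota_uniq //.
  by move=> i j /occF[Ai _] /occF[Aj _]; apply: injA.
rewrite -(size_map (nth a s)) -(card_uniqP uniq_sF).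
by apply/subset_leq_card/subsetP => _ /mapP[i /occF[_ sE] ->].
Qed.

Lemma card_walk_edge E s : E \in walk_edges s -> #|E| <= 2.
Proof. by case/mapP=> -[u v] _ ->; rewrite cards2; case: (u != v). Qed.

Definition odd_vertices a s := mkseq (fun k => nth a s k.*2.+1) (size s)./2.

Lemma odd_vertices_uniq_inj a s : uniq (odd_vertices a s) ->
  {in [pred i | odd i && (i < size s)] &, injective (nth a s)}.
Proof.
move=> uniq_s i j /andP[odd_i lt_i] /andP[odd_j lt_j] sij.
have halfK k : odd k -> (k./2).*2.+1 = k.
  by move=> odd_k; rewrite -[RHS]odd_double_half odd_k.
have lt_half k : odd k -> k < size s -> k./2 < size (odd_vertices a s).
  by move=> odd_k; rewrite size_mkseq -{1}(halfK k odd_k); lia.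
have lt_i2 := lt_half _ odd_i lt_i; have lt_j2 := lt_half _ odd_j lt_j.
rewrite -(halfK i odd_i) -(halfK j odd_j); congr (_.*2.+1); apply/eqP.
rewrite -(nth_uniq a lt_i2 lt_j2 uniq_s).
by rewrite size_mkseq in lt_i2 lt_j2; rewrite !nth_mkseq //= !halfK // sij.
Qed.

Lemma simple_walk_uniq_odd_vertices e M a b s :
  shifted_walk e M a b s -> uniq (odd_vertices a s) -> simple_walk M s.
Proof.
move=> /shifted_walkP[_ _ _ Ms] uniq_s E ME.
have [/card_walk_edge cardE | /count_memPn -> //] := boolP (E \in walk_edges s).
apply: leq_trans cardE.
apply: count_walk_edges_le_card (odd_vertices_uniq_inj uniq_s) _.
move=> i lt_i edge_i.
have lt_i1 : i.+1 < size s by lia.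
by rewrite inE -(Ms _ lt_i1) -(nth_walk_edges a) // edge_i ME ltnW.
Qed.

Definition shortcut i j s := take i s ++ drop j s.

Definition shortcut_index i j k := if k < i then k else k + (j - i).

Section Shortcut.
Variables (a : V) (s : seq V) (i j : nat).
Hypotheses (lt_ij : i < j) (lt_js : j < size s) (s_ij : nth a s i = nth a s j).

Lemma size_shortcut : size (shortcut i j s) = size s - (j - i).
Proof. rewrite size_cat size_drop size_takel; lia. Qed.

Lemma nth_shortcut k : nth a (shortcut i j s) k = nth a s (shortcut_index i j k).
Proof.
rewrite nth_cat size_takel /shortcut_index; last lia.
by case: ifP => lt_ki; rewrite ?nth_take ?nth_drop //; congr nth; lia.
Qed.

Lemma nth_shortcut_succ k :
  nth a (shortcut i j s) k.+1 = nth a s (shortcut_index i j k).+1.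
Proof.
rewrite nth_shortcut /shortcut_index.
case: (ltngtP k.+1 i) => [// | lt_ik1 | eq_k1i]; first by congr nth; lia.
by rewrite eq_k1i subnKC ?s_ij // ltnW.
Qed.

Lemma shortcut_index_lt k :
  k.+1 < size (shortcut i j s) -> (shortcut_index i j k).+1 < size s.
Proof. by rewrite size_shortcut /shortcut_index; case: ifP; lia. Qed.

End Shortcut.

Lemma shifted_walk_shortcut e M a b s i j :
  shifted_walk e M a b s -> i < j < size s -> odd i -> odd j ->
  nth a s i = nth a s j -> shifted_walk e M a b (shortcut i j s).
Proof.
move=> /shifted_walkP[[pos_s even_s] [head_s last_s] ePs Ms] /andP[lt_ij lt_js].
move=> odd_i odd_j s_ij; have odd_index k : odd (shortcut_index i j k) = odd k.
  by rewrite /shortcut_index; case: ifP; lia.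
apply/shifted_walkP; split=> [| | k lt_k | k lt_k].
- rewrite size_shortcut //; lia.
- rewrite !nth_shortcut // size_shortcut // /shortcut_index ifT; last lia.
  by rewrite ifN; last lia; split=> //; rewrite -last_s; congr nth; lia.
- rewrite nth_shortcut // nth_shortcut_succ //.
  by apply/ePs/(shortcut_index_lt lt_ij).
- rewrite nth_shortcut // nth_shortcut_succ // Ms ?odd_index //.
  exact: shortcut_index_lt.
Qed.

Lemma walk_contains_shortcut a s i j : i < j < size s ->
  nth a s i = nth a s j -> walk_contains s (shortcut i j s).
Proof.
move=> /andP[lt_ij lt_js] s_ij E /(nthP set0)[k]; rewrite size_walk_edges => lt_k.
have lt_k1 : k.+1 < size (shortcut i j s) by lia.
have lt_ik1 := shortcut_index_lt lt_ij lt_js lt_k1.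
rewrite (nth_walk_edges a) // nth_shortcut // nth_shortcut_succ // => <-.
apply/(nthP set0); exists (shortcut_index i j k).
  by rewrite size_walk_edges; lia.
by rewrite (nth_walk_edges a) //; lia.
Qed.

Lemma odd_vertices_not_uniq a s : ~~ uniq (odd_vertices a s) ->
  exists i j, [/\ i < j < size s, odd i, odd j & nth a s i = nth a s j].
Proof.
case/(uniqPn a)=> k [l] []; rewrite size_mkseq => lt_kl lt_l.
rewrite !nth_mkseq ?(ltn_trans lt_kl) // => s_kl.
exists k.*2.+1, l.*2.+1; rewrite /= odd_double; split=> //; lia.
Qed.

End ShiftedWalks.

Theorem lemma5p1 (V : finType) (e : rel V) (M : {set {set V}}) (a b : V)
    (W : seq V) :
  simple_graph e -> perfect_matching e M -> shifted_walk e M a b W ->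
  exists W' : seq V,
    [/\ shifted_walk e M a b W', simple_walk M W' & walk_contains W W'].
Proof.
move=> _ _; have [n] := ubnP (size W); elim: n W => // n IH W lt_Wn walk_W.
have [uniq_W | /odd_vertices_not_uniq[i [j [lt_ijW odd_i odd_j W_ij]]]] :=
  boolP (uniq (odd_vertices a W)).
  by exists W; split=> //; apply: simple_walk_uniq_odd_vertices walk_W uniq_W.
have lt_cut_n : size (shortcut i j W) < n.
  by case/andP: lt_ijW => lt_ij lt_jW; rewrite size_shortcut //; lia.
have walk_cut := shifted_walk_shortcut walk_W lt_ijW odd_i odd_j W_ij.
have [W' [walk_W' simple_W' sub_W']] := IH _ lt_cut_n walk_cut.
exists W'; split=> //.
exact: walk_contains_trans (walk_contains_shortcut lt_ijW W_ij) sub_W'.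
Qed.
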